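(* Let $N, R, k\in\mathbb{N}$. For every choice of bijections $g_1,\dots,g_R:[N]\to[N]$ there exists a depth-$k$ transformer (with learned embeddings) that, without Chain-of-Thought, solves the $k$-hop factual recall problem, i.e. on every input $(s_0,r_1,\dots,r_k)\in[N]\times[R]^k$ it correctly outputs $(g_{r_k}\circ\cdots\circ g_{r_1})(s_0)$, using either of the following architectures: (1) embedding dimension $d=\tilde O(k)$ and MLP width $O(N\cdot R)$; (2) embedding dimension $d=\tilde O(R^k)$ and MLP width $\tilde O(R^k)$.
   Context: Write $[N]=\{1,\dots,N\}$. Subjects are $[N]$, relations are $[R]$, each relation $r$ has a bijection $g_r:[N]\to[N]$. The transformer is over vocabulary $[N]\cup[R]$ with embeddings in $\mathbb{R}^d$; each layer applies (causal, softmax) multi-head self-attention $Z=\sum_h W_V^{(h)}X(A^{(h)})^\top$ with $A^{(h)}=\mathrm{softmax}((W_K^{(h)}X)^\top(W_Q^{(h)}X))$, a residual connection $\tilde X = Z+X$, and a column-wise ReLU MLP with residual connection $X'=\tilde X+\mathrm{MLP}(\tilde X)$; ''depth $k$'' means $k$ such layers, and MLP width is its hidden width. The notation $\tilde O(\cdot)$ suppresses logarithmic factors (in $N$, $R$, $k$). *)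

From HB Require Import structures.
From Stdlib Require Reals.
From mathcomp Require Import all_boot all_order all_algebra all_fingroup.
From mathcomp Require Import Rstruct.
Set Implicit Arguments. Unset Strict Implicit. Unset Printing Implicit Defensive.
Import Order.TTheory GRing.Theory Num.Theory.
Local Open Scope ring_scope.

Notation Real := Rdefinitions.R.

Record head (d : nat) := Head {
  WK : 'M[Real]_(d, d);
  WQ : 'M[Real]_(d, d);
  WV : 'M[Real]_(d, d) }.

Record layer (d m : nat) := Layer {
  heads : seq (head d);
  W1 : 'M[Real]_(m, d);
  b1 : 'cV[Real]_m;
  W2 : 'M[Real]_(d, m);
  b2 : 'cV[Real]_d }.

Definition relu (x : Real) : Real := Num.max x 0.

(* Causal softmax attention matrix A (T x T): A j i is the weight that
   query position j puts on key position i; zero for i > j.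
   The scores are S = (WK X)^T (WQ X), i.e. S i j = <WK x_i, WQ x_j>. *)
Definition attn_matrix d T (h : head d) (X : 'M[Real]_(d, T)) : 'M[Real]_T :=
  let S := (WK h *m X)^T *m (WQ h *m X) in
  \matrix_(j, i)
    (if (nat_of_ord i <= nat_of_ord j)%N then
       Rtrigo_def.exp (S i j) /
       (\sum_(i' < T | (nat_of_ord i' <= nat_of_ord j)%N) Rtrigo_def.exp (S i' j))
     else 0).

Definition mhsa d T (hs : seq (head d)) (X : 'M[Real]_(d, T)) : 'M[Real]_(d, T) :=
  \sum_(h <- hs) (WV h *m X *m (attn_matrix h X)^T).

Definition mlp d m (L : layer d m) (x : 'cV[Real]_d) : 'cV[Real]_d :=
  W2 L *m map_mx relu (W1 L *m x + b1 L) + b2 L.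

Definition apply_layer d m T (L : layer d m) (X : 'M[Real]_(d, T)) : 'M[Real]_(d, T) :=
  let Xt := mhsa (heads L) X + X in
  Xt + \matrix_(i, j) (mlp L (col j Xt)) i 0.

Record transformer (V : finType) (d m T : nat) := Transformer {
  emb : V -> 'I_T -> 'cV[Real]_d;
  layers : seq (layer d m);
  unemb : V -> 'rV[Real]_d }.

Definition depth V d m T (M : transformer V d m T) : nat := size (layers M).

Definition hidden V d m T (M : transformer V d m T) (toks : 'I_T -> V)
  : 'M[Real]_(d, T) :=
  foldl (fun X L => apply_layer L X)
        (\matrix_(i, j) (emb M (toks j) j) i 0) (layers M).

(* The transformer outputs token v on input toks (no chain of thought: a
   single forward pass, read at the last position) iff the logit of v at the
   last position is strictly larger than the logit of every other token. *)
Definition outputs V d m T (M : transformer V d m T.+1) (toks : 'I_T.+1 -> V)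
  (v : V) : Prop :=
  let x := col ord_max (hidden M toks) in
  forall w : V, w != v -> (unemb M w *m x) 0 0 < (unemb M v *m x) 0 0.

Definition vocab (N R : nat) : finType := ('I_N + 'I_R)%type.

Definition khop_input N R k (s0 : 'I_N) (rs : 'I_k -> 'I_R) : 'I_k.+1 -> vocab N R :=
  fun j => match unlift ord0 j with
           | None => inl s0
           | Some i => inr (rs i)
           end.

Definition khop_answer N R k (g : 'I_R -> {perm 'I_N}) (s0 : 'I_N)
  (rs : 'I_k -> 'I_R) : 'I_N :=
  foldl (fun s i => g (rs i) s) s0 (enum 'I_k).

Definition solves_khop N R k (g : 'I_R -> {perm 'I_N}) d m
  (M : transformer (vocab N R) d m k.+1) : Prop :=
  forall (s0 : 'I_N) (rs : 'I_k -> 'I_R),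
    outputs M (khop_input s0 rs) (inl (khop_answer g s0 rs)).

Definition polylog (N R k c : nat) : nat := (trunc_log 2 (N * R * k)).+1 ^ c.

(* The answer is read off a quadratic score: with a coordinate that is constantly 1, the logit
   2 v a + 1 - v^2 = 1 + a^2 - (v - a)^2 of subject v is maximal exactly at v = a.  In both
   constructions the first layer has an attention head with zero keys and queries; it averages
   all positions, so with value matrix (k+1) W it copies the whole input into the last column.
   The MLPs are banks of "gates": five ReLUs compute relu (s - |y|), which detects whether an
   integer-valued y vanishes.
   (1) Layer i applies the i-th hop: its MLP has one gate per pair (s', r') that fires iff
   s + N r_i = s' + N r', and then adds g_r'(s') - s' to the subject coordinate s.
   (2) The relation sequence is gathered as the integer code rs = sum_i r_i R^i.  The first MLP
   has two gates per relation sequence f, firing iff code rs = code f and outputting 1 and s0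
   respectively; the unembedding of v then weights them by 1 - p^2 and 2 p, where p is the
   preimage of v under g_f, so that the logit of v is the score of p at s0.  The remaining
   layers are idle. *)

From Pilot Require Import Defs.
From mathcomp Require Import all_boot all_order all_algebra all_fingroup.
From mathcomp Require Import Rstruct ring lra zify.
Set Implicit Arguments. Unset Strict Implicit. Unset Printing Implicit Defensive.
Import Order.TTheory GRing.Theory Num.Theory.
Local Open Scope ring_scope.

Lemma relu_id (x : Real) : 0 <= x -> relu x = x.
Proof. by move=> x_ge0; rewrite /relu max_l. Qed.

Lemma relu_eq0 (x : Real) : x <= 0 -> relu x = 0.
Proof. by move=> x_le0; rewrite /relu max_r. Qed.

Definition gate (s y : Real) : Real :=
  relu (s - y) + relu (s + y) - relu y - relu (- y) - relu s.

Lemma gateE (s y : Real) : 0 <= s -> gate s y = relu (s - `|y|).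
Proof.
move=> s_ge0; rewrite /gate (relu_id s_ge0).
have [y_ge0 | y_lt0] := lerP 0 y.
  rewrite ger0_norm // (relu_id y_ge0) (@relu_id (s + y)) ?(@relu_eq0 (- y)); lra.
rewrite ltr0_norm // opprK (@relu_eq0 y) ?(@relu_id (s - y)) ?(@relu_id (- y)); lra.
Qed.

Lemma natr_dist_ge1 (R : realDomainType) (a b : nat) :
  a != b -> 1 <= `|a%:R - b%:R : R|.
Proof.
move=> neq_ab; wlog lt_ab : a b neq_ab / (a < b)%N => [hwlog|].
  have [lt_ab | lt_ba | eq_ab] := ltngtP a b; last by rewrite eq_ab eqxx in neq_ab.
  - exact: hwlog.
  - by rewrite distrC; apply: hwlog; rewrite // eq_sym.
have le_ab := ltnW lt_ab.
by rewrite distrC ger0_norm ?subr_ge0 ?ler_nat // -natrB // ler1n subn_gt0.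
Qed.

Lemma gate_natr (s B : Real) (a b : nat) : 0 <= s <= B ->
  gate s (B * (a%:R - b%:R)) = if a == b then s else 0.
Proof.
case/andP=> s_ge0 s_leB; rewrite gateE //.
have [-> | neq_ab] := eqVneq a b; first by rewrite subrr mulr0 normr0 subr0 relu_id.
have B_ge0 : 0 <= B by apply: le_trans s_leB.
rewrite relu_eq0 // normrM ger0_norm // subr_le0 (le_trans s_leB) //.
by rewrite -[X in X <= _]mulr1 ler_wpM2l // natr_dist_ge1.
Qed.

Definition score (v a : Real) : Real := 2 * v * a + (1 - v ^+ 2).

Lemma score_lt (v a : nat) : v != a -> score v%:R a%:R < score a%:R a%:R.
Proof.
move=> /(natr_dist_ge1 Real) dist_ge1.
rewrite -subr_gt0 (_ : _ - _ = (v%:R - a%:R) ^+ 2); last by rewrite /score; ring.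
by rewrite -real_normK ?num_real // (lt_le_trans ltr01) // exprn_ege1.
Qed.

Lemma score_self_gt0 (a : Real) : 0 < score a a.
Proof.
rewrite /score (_ : _ + _ = 1 + a ^+ 2); last by ring.
by rewrite (lt_le_trans ltr01) // lerDl sqr_ge0.
Qed.

Lemma radix_inj (n a a' b b' : nat) : (a < n)%N -> (a' < n)%N ->
  (a + n * b = a' + n * b')%N -> a = a' /\ b = b'.
Proof.
have digits c : (c < n)%N -> forall x, ((c + n * x) %% n = c /\ (c + n * x) %/ n = x)%N.
  move=> lt_cn x; have n_gt0 : (0 < n)%N by apply: leq_ltn_trans lt_cn.
  by rewrite addnC mulnC modnMDl modn_small // divnMDl // divn_small // addn0.
move=> /digits/(_ b)[mod_a div_a] /digits/(_ b')[mod_a' div_a'] eq_ab.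
by split; [rewrite -mod_a eq_ab mod_a' | rewrite -div_a eq_ab div_a'].
Qed.

Definition code R k (rs : 'I_k -> 'I_R) : nat := (\sum_(i < k) rs i * R ^ i)%N.

Lemma code_recl R k (rs : 'I_k.+1 -> 'I_R) :
  code rs = (rs ord0 + R * code (fun i => rs (lift ord0 i)))%N.
Proof.
rewrite /code big_ord_recl expn0 muln1 big_distrr; congr (_ + _)%N.
by apply: eq_bigr => i _; rewrite lift0 expnS mulnCA.
Qed.

Lemma code_inj R k (rs rs' : 'I_k -> 'I_R) : code rs = code rs' -> rs =1 rs'.
Proof.
elim: k rs rs' => [|k IHk] rs rs' + i; first by case: i.
rewrite !code_recl => /radix_inj[//||eq_head /IHk eq_tail]; first exact: ltn_ord.
by case: (unliftP ord0 i) => [j ->|->]; [exact: eq_tail | exact: val_inj].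
Qed.

Lemma code_eqE R k (f : {ffun 'I_k -> 'I_R}) (rs : 'I_k -> 'I_R) :
  (code f == code rs) = (f == [ffun i => rs i]).
Proof.
apply/eqP/eqP => [/code_inj eq_f | ->]; first by apply/ffunP => i; rewrite ffunE eq_f.
by apply: eq_bigr => i _; rewrite ffunE.
Qed.

(* In {perm _}, (p * q) x = q (p x): the product applies g (rs 0) first. *)
Definition hop_perm N R k (g : 'I_R -> {perm 'I_N}) (rs : 'I_k -> 'I_R) : {perm 'I_N} :=
  (\prod_(i < k) g (rs i))%g.

Lemma khop_answerE N R k (g : 'I_R -> {perm 'I_N}) (s0 : 'I_N) (rs : 'I_k -> 'I_R) :
  khop_answer g s0 rs = hop_perm g rs s0.
Proof.
(* enum 'I_k and index_enum 'I_k both unfold to Finite.enum 'I_k. *)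
rewrite /khop_answer /hop_perm enumT [index_enum _]unlock.
elim: (Finite.enum _) s0 => [|i l IHl] s0 /=; first by rewrite big_nil perm1.
by rewrite big_cons permM IHl.
Qed.

Lemma attn_matrix_zero_scores d T (W : 'M[Real]_d) (X : 'M[Real]_(d, T.+1)) i :
  attn_matrix (Head 0 0 W) X ord_max i = T.+1%:R^-1.
Proof.
rewrite /attn_matrix /= !mul0mx trmx0 mul0mx mxE leq_ord mxE Rtrigo_def.exp_0.
under eq_bigr do rewrite mxE Rtrigo_def.exp_0.
rewrite (eq_bigl xpredT) => [|j]; last by rewrite leq_ord.
by rewrite sumr_const card_ord mul1r.
Qed.

Lemma mhsa_average d T (W : 'M[Real]_d) (X : 'M[Real]_(d, T.+1)) :
  col ord_max (mhsa [:: Head 0 0 (T.+1%:R *: W)] X) = W *m \sum_j col j X.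
Proof.
apply/matrixP => c z; rewrite (ord1 z) /mhsa big_seq1 /= mulmx_sumr summxE.
rewrite [LHS]mxE [LHS]mxE; apply: eq_bigr => j _.
rewrite [_^T _ _]mxE attn_matrix_zero_scores -scalemxAl mxE.
rewrite colE mulmxA -colE [RHS]mxE mulrAC mulfV ?mul1r //.
by rewrite pnatr_eq0.
Qed.

Lemma sum_enum_val (U : finType) (F : U -> Real) :
  \sum_(i < #|U|) F (enum_val i) = \sum_u F u.
Proof. by rewrite -big_enum_val. Qed.

Lemma col_mx_sum (R : zmodType) m1 m2 n I (r : seq I)
    (A : I -> 'M[R]_(m1, n)) (B : I -> 'M[R]_(m2, n)) :
  \sum_(i <- r) col_mx (A i) (B i) = col_mx (\sum_(i <- r) A i) (\sum_(i <- r) B i).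
Proof.
elim: r => [|i r IHr]; first by rewrite !big_nil col_mx0.
by rewrite !big_cons IHr add_col_mx.
Qed.

Lemma col_of_columns d T (v : 'I_T -> 'cV[Real]_d) j :
  col j (\matrix_(i, j) v j i 0) = v j.
Proof. by apply/matrixP => i z; rewrite (ord1 z) !mxE. Qed.

Lemma col_gather d1 d2 T (E : 'I_T.+1 -> 'cV[Real]_d1) (P : 'M[Real]_(d2, d1))
    (X : 'M[Real]_(d1 + d2, T.+1)) :
  (forall j, col j X = col_mx (E j) 0) ->
  col ord_max (mhsa [:: Head 0 0 (T.+1%:R *: block_mx 0 0 P 0)] X + X) =
  col_mx (E ord_max) (P *m \sum_j E j).
Proof.
move=> colX; rewrite colE mulmxDl -!colE mhsa_average colX.
under eq_bigr do rewrite colX.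
rewrite col_mx_sum big1_eq mul_block_col !mul0mx !addr0 add_col_mx add0r.
by rewrite addr0.
Qed.

Definition mlp_step d m (L : layer d m) (x : 'cV[Real]_d) : 'cV[Real]_d :=
  x + mlp L x.

Lemma col_apply_layer d m T (L : layer d m) (X : 'M[Real]_(d, T)) j :
  col j (apply_layer L X) = mlp_step L (col j (mhsa (heads L) X + X)).
Proof.
apply/matrixP => c z; rewrite (ord1 z) /apply_layer /mlp_step /= !mxE.
by congr (_ + _); rewrite mxE.
Qed.

Lemma col_foldl_headless d m T I (F : I -> layer d m) (l : seq I)
    (X : 'M[Real]_(d, T)) j :
  (forall i, heads (F i) = [::]) ->
  col j (foldl (fun X L => apply_layer L X) X (map F l)) =
  foldl (fun x i => mlp_step (F i) x) (col j X) l.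
Proof.
move=> no_heads; elim: l X => [|i l IHl] X //=.
by rewrite IHl col_apply_layer no_heads /mhsa big_nil add0r.
Qed.

Definition idle_layer d m : layer d m := Layer [::] 0 0 0 0.

Lemma foldl_idle_layer d m T n (X : 'M[Real]_(d, T)) :
  foldl (fun X L => apply_layer L X) X (nseq n (idle_layer d m)) = X.
Proof.
elim: n => [|n IHn] //=; rewrite -[RHS]IHn; congr foldl.
rewrite /apply_layer /mhsa big_nil add0r -[RHS]addr0; congr (_ + _).
by apply/matrixP => i j; rewrite mxE /mlp /= mul0mx addr0 !mxE.
Qed.

Section GateBank.
Variables (n d : nat) (S Y : 'M[Real]_(n, d)) (s y : 'cV[Real]_n) (O : 'M[Real]_(d, n)).

Definition gate_bank (hs : seq (Defs.head d)) : layer d (n + n + n + n + n) :=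
  Layer hs
    (col_mx (col_mx (col_mx (col_mx (S - Y) (S + Y)) Y) (- Y)) S)
    (col_mx (col_mx (col_mx (col_mx (s - y) (s + y)) y) (- y)) s)
    (row_mx (row_mx (row_mx (row_mx O O) (- O)) (- O)) (- O)) 0.

Lemma mlp_gate_bank hs x :
  mlp (gate_bank hs) x = O *m map2_mx gate (S *m x + s) (Y *m x + y).
Proof.
rewrite /mlp /= addr0 !mul_col_mx !add_col_mx !map_col_mx !mul_row_col !mulNmx.
have pre_sub : (S - Y) *m x + (s - y) = (S *m x + s) - (Y *m x + y).
  by rewrite mulmxBl opprD addrACA.
have pre_add : (S + Y) *m x + (s + y) = (S *m x + s) + (Y *m x + y).
  by rewrite mulmxDl addrACA.
rewrite pre_sub pre_add -opprD; move: (S *m x + s) (Y *m x + y) => sig lev.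
rewrite -!mulmxDr -!mulmxBr; congr (O *m _).
by apply/matrixP => i j; rewrite !mxE.
Qed.
End GateBank.

Lemma row_matrix_mulmx n d (F : 'I_n -> 'rV[Real]_d) (x : 'cV[Real]_d) j :
  ((\matrix_(i < n) F i) *m x) j 0 = (F j *m x) 0 0.
Proof. by rewrite !mxE; apply: eq_bigr => l _; rewrite mxE. Qed.

Lemma delta_mulmx d (i : 'I_d) (x : 'cV[Real]_d) :
  (delta_mx (0 : 'I_1) i *m x) 0 0 = x i 0.
Proof. by rewrite -rowE mxE. Qed.

Lemma scaled_delta_mulmx d (a : Real) (i : 'I_d) (x : 'cV[Real]_d) :
  ((a *: delta_mx (0 : 'I_1) i) *m x) 0 0 = a * x i 0.
Proof. by rewrite -scalemxAl mxE delta_mulmx. Qed.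

Lemma sum_ifeq (I : finType) (i0 : I) (F : I -> Real) :
  \sum_i (if i == i0 then F i else 0) = F i0.
Proof. by rewrite -big_mkcond big_pred1_eq. Qed.

Lemma sum_mul_ifeq (I : finType) (i0 : I) (F G : I -> Real) :
  \sum_i F i * (if i == i0 then G i else 0) = F i0 * G i0.
Proof.
rewrite -(sum_ifeq i0 (fun i => F i * G i)); apply: eq_bigr => i _.
by case: (i == i0); rewrite ?mulr0.
Qed.

Lemma mulmx_onehot n d (O : 'M[Real]_(d, n)) (j0 : 'I_n) :
  O *m \col_j (if j == j0 then 1 else 0) = col j0 O.
Proof.
rewrite colE; congr (O *m _); apply/matrixP => j z.
by rewrite (ord1 z) !mxE eqxx andbT; case: (j == j0).
Qed.

Lemma enum_val_eq (U : finType) (j : 'I_#|U|) (u : U) :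
  (enum_val j == u) = (j == enum_rank u).
Proof. by apply/eqP/eqP => [<- | ->]; rewrite ?enum_valK ?enum_rankK. Qed.

Section HopChain.
Variables (N R k : nat) (g : 'I_R -> {perm 'I_N}).

(* k.+1 hops, hence k.+2 input positions. *)
Local Notation K := k.+2.

Local Notation dim := ((1 + K) + K).
Local Notation units := #|{: 'I_N * 'I_R}|.

Definition token_value (t : vocab N R) : Real :=
  match t with inl s => (val s)%:R | inr r => (val r)%:R end.

(* The hidden space is [1 | one-hot token values by position | gathered values]; after the
   first head, slot 0 holds the current subject and slot 1 + i the relation r_i. *)
Definition one_coord : 'I_dim := lshift K (lshift K ord0).
Definition slot (p : 'I_K) : 'I_dim := rshift (1 + K) p.

Definition chain_input (t : vocab N R) (p : 'I_K) : 'cV[Real]_(1 + K) :=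
  col_mx (const_mx 1) (\col_q (if p == q then token_value t else 0)).

Definition chain_embedding (t : vocab N R) (p : 'I_K) : 'cV[Real]_dim :=
  col_mx (chain_input t p) 0.

Definition gather_head : Defs.head dim :=
  Head 0 0 (K%:R *: block_mx 0 0 (row_mx 0 1%:M) 0).

Definition pair_code (u : 'I_N * 'I_R) : nat := u.1 + N * u.2.

Definition hop_shift (u : 'I_N * 'I_R) : Real := (val (g u.2 u.1))%:R - (val u.1)%:R.

Definition hop_probe (i : 'I_k.+1) : 'rV[Real]_dim :=
  delta_mx 0 (slot ord0) + N%:R *: delta_mx 0 (slot (lift ord0 i)).

Definition hop_layer (i : 'I_k.+1) (hs : seq (Defs.head dim)) :=
  gate_bank 0 (\matrix_(j < units) hop_probe i)
    (const_mx 1) (\col_j - (pair_code (enum_val j))%:R)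
    (\matrix_(c, j) (if c == slot ord0 then hop_shift (enum_val j) else 0)) hs.

Definition chain_unembedding (t : vocab N R) : 'rV[Real]_dim :=
  if t is inl v then
    (2 * (val v)%:R) *: delta_mx 0 (slot ord0) + (1 - (val v)%:R ^+ 2) *: delta_mx 0 one_coord
  else 0.

Definition chain_transformer : transformer (vocab N R) dim (units + units + units + units + units) K :=
  Transformer chain_embedding
    (hop_layer ord0 [:: gather_head] :: [seq hop_layer i [::] | i <- behead (enum 'I_k.+1)])
    chain_unembedding.

Definition hop_state (s : 'I_N) (rs : 'I_k.+1 -> 'I_R) (x : 'cV[Real]_dim) : Prop :=
  [/\ x one_coord 0 = 1, x (slot ord0) 0 = (val s)%:R
    & forall i, x (slot (lift ord0 i)) 0 = (val (rs i))%:R].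

Lemma eq_pair_code (u v : 'I_N * 'I_R) : (pair_code u == pair_code v) = (u == v).
Proof.
apply/eqP/eqP => [|-> //]; case: u v => [s r] [s' r']; rewrite /pair_code /=.
move=> /radix_inj[]; try exact: ltn_ord.
by move=> /val_inj -> /val_inj ->.
Qed.

Lemma hop_layer_step i hs s rs x :
  hop_state s rs x -> hop_state (g (rs i) s) rs (mlp_step (hop_layer i hs) x).
Proof.
case=> x_one x_subj x_rel; set u0 := (s, rs i).
have probe j : ((\matrix_(j < units) hop_probe i) *m x) j 0 = (pair_code u0)%:R.
  rewrite row_matrix_mulmx mulmxDl mxE delta_mulmx scaled_delta_mulmx.
  by rewrite x_subj x_rel /pair_code natrD natrM.
have fire : mlp (hop_layer i hs) x = \col_c (if c == slot ord0 then hop_shift u0 else 0).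
  rewrite mlp_gate_bank mul0mx add0r; set G := map2_mx _ _ _.
  have -> : G = \col_j (if j == enum_rank u0 then 1 else 0).
    apply/matrixP => j z; rewrite (ord1 z) /G mxE mxE mxE probe !mxE.
    rewrite -[X in gate _ X]mul1r gate_natr ?ler01 ?lexx //.
    by rewrite eq_pair_code eq_sym enum_val_eq.
  by rewrite mulmx_onehot; apply/matrixP => c z; rewrite (ord1 z) !mxE enum_rankK.
split=> [||j]; rewrite /mlp_step fire !mxE ?x_one ?x_subj ?x_rel.
- by rewrite /one_coord /slot eq_lrshift addr0.
- by rewrite eqxx /hop_shift /=; ring.
- by rewrite /slot eq_rshift eq_sym (negbTE (neq_lift _ _)) addr0.
Qed.

Lemma hop_layers_fold (rs : 'I_k.+1 -> 'I_R) (l : seq 'I_k.+1) s x :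
  hop_state s rs x ->
  hop_state (foldl (fun s i => g (rs i) s) s l) rs
    (foldl (fun x i => mlp_step (hop_layer i [::]) x) x l).
Proof. by elim: l s x => [|i l IHl] s x //= /hop_layer_step/IHl. Qed.

Lemma chain_gather s0 rs :
  let X := \matrix_(i, j) chain_embedding (khop_input s0 rs j) j i 0 in
  hop_state s0 rs (col ord_max (mhsa [:: gather_head] X + X)).
Proof.
move=> X; rewrite /gather_head (col_gather (E := fun j => chain_input (khop_input s0 rs j) j));
  last by move=> j; rewrite col_of_columns.
rewrite mulmx_sumr; under eq_bigr do rewrite /chain_input mul_row_col mul0mx mul1mx add0r.
have gathered q : (\sum_j \col_q0 (if j == q0 then token_value (khop_input s0 rs j) else 0)) q 0
    = token_value (khop_input s0 rs q).
  by rewrite summxE; under eq_bigr do rewrite mxE; rewrite sum_ifeq.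
split=> [||i].
- by rewrite /one_coord col_mxEu /chain_input col_mxEu mxE.
- by rewrite /slot col_mxEd gathered /khop_input unlift_none.
- by rewrite /slot col_mxEd gathered /khop_input liftK.
Qed.

Lemma chain_readout a rs x :
  hop_state a rs x ->
  forall w, w != inl a -> (chain_unembedding w *m x) 0 0 < (chain_unembedding (inl a) *m x) 0 0.
Proof.
case=> x_one x_subj _.
have logit v : (chain_unembedding (inl v) *m x) 0 0 = score (val v)%:R (val a)%:R.
  rewrite /= mulmxDl -!scalemxAl mxE [X in _ + X]mxE [X in X + _]mxE !delta_mulmx.
  by rewrite x_subj x_one mulr1.
move=> [v | r] neq_w; rewrite logit; last first.
  by rewrite /= mul0mx mxE score_self_gt0.
by rewrite logit score_lt.
Qed.

Lemma chain_solves : solves_khop g chain_transformer.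
Proof.
move=> s0 rs; rewrite /outputs /hidden /= col_foldl_headless // col_apply_layer.
apply: chain_readout; rewrite /khop_answer enum_ordSl /=.
exact/hop_layers_fold/hop_layer_step/chain_gather.
Qed.

End HopChain.

Section LookupTable.
Variables (N R k : nat) (g : 'I_R -> {perm 'I_N}).

Local Notation K := k.+2.
Local Notation rseq := {ffun 'I_k.+1 -> 'I_R}.
Local Notation units := #|{: rseq + rseq}|.
Local Notation dim := (2 + (2 + units)).

(* The hidden space is [input pair | gathered (s0, code rs) | one feature per gate unit]. *)
Definition subject_coord : 'I_dim := rshift 2 (lshift units ord0).
Definition code_coord : 'I_dim := rshift 2 (lshift units ord_max).

(* A token contributes (s, 0) or (0, r R^(p-1)), so that summing over positions gives
   (s0, code rs). *)
Definition input_pair (t : vocab N R) (p : 'I_K) : 'cV[Real]_2 :=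
  match t with
  | inl s => \col_q (if q == ord0 then (val s)%:R else 0)
  | inr r => \col_q (if q == ord0 then 0 else (val r * R ^ p.-1)%:R)
  end.

Definition table_embedding (t : vocab N R) (p : 'I_K) : 'cV[Real]_dim :=
  col_mx (input_pair t p) 0.

Definition copy_head : Defs.head dim :=
  Head 0 0 (K%:R *: block_mx 0 0 (col_mx 1%:M 0) 0).

(* Unit inl f outputs [rs = f] and unit inr f outputs s0 [rs = f]; the latter needs the
   larger scale N > s0 in gate_natr. *)
Definition unit_seq (u : rseq + rseq) : rseq := match u with inl f | inr f => f end.
Definition unit_scale (u : rseq + rseq) : Real := if u is inr _ then N%:R else 1.

Definition lookup_layer :=
  gate_bank
    (\matrix_(j < units) ((if enum_val j is inr _ then 1 else 0) *: delta_mx 0 subject_coord))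
    (\matrix_(j < units) (unit_scale (enum_val j) *: delta_mx 0 code_coord))
    (\col_j (if enum_val j is inl _ then 1 else 0))
    (\col_j - (unit_scale (enum_val j) * (code (unit_seq (enum_val j)))%:R))
    (col_mx 0 (col_mx 0 1%:M)) [:: copy_head].

Definition preimage (v : 'I_N) (f : rseq) : Real := (val ((hop_perm g f)^-1%g v))%:R.

Definition table_weight (v : 'I_N) (u : rseq + rseq) : Real :=
  match u with inl f => 1 - preimage v f ^+ 2 | inr f => 2 * preimage v f end.

Definition table_unembedding (t : vocab N R) : 'rV[Real]_dim :=
  if t is inl v then row_mx 0 (row_mx 0 (\row_j table_weight v (enum_val j))) else 0.

Definition table_transformer :
    transformer (vocab N R) dim (units + units + units + units + units) K :=
  Transformer table_embedding (lookup_layer :: nseq k (idle_layer _ _)) table_unembedding.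

Section Run.
Variables (s0 : 'I_N) (rs : 'I_k.+1 -> 'I_R).

Definition subject_and_code : 'cV[Real]_2 :=
  \col_q (if q == ord0 then (val s0)%:R else (code rs)%:R).

Definition unit_signal (u : rseq + rseq) : Real := if u is inr _ then (val s0)%:R else 1.

Definition lookup_features : 'cV[Real]_units :=
  \col_j (if unit_seq (enum_val j) == [ffun i => rs i] then unit_signal (enum_val j) else 0).

Lemma sum_input_pairs : \sum_j input_pair (khop_input s0 rs j) j = subject_and_code.
Proof.
apply/matrixP => q z; rewrite (ord1 z) summxE big_ord_recl /khop_input unlift_none.
under eq_bigr do rewrite liftK.
rewrite !mxE; have [-> | q_ne0] := eqVneq q ord0.
  by rewrite big1 ?addr0 // => i _; rewrite mxE.
rewrite add0r /code natr_sum; apply: eq_bigr => i _.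
by rewrite mxE (negbTE q_ne0).
Qed.

Lemma mlp_lookup_layer e :
  mlp lookup_layer (col_mx e (col_mx subject_and_code 0)) =
  col_mx 0 (col_mx 0 lookup_features).
Proof.
rewrite mlp_gate_bank !mul_col_mx !mul0mx mul1mx; congr (col_mx 0 (col_mx 0 _)).
apply/matrixP => j z; rewrite (ord1 z) mxE [X in gate X _]mxE [X in gate _ X]mxE.
rewrite [X in gate (_ + X) _]mxE [X in gate _ (_ + X)]mxE !row_matrix_mulmx.
rewrite !scaled_delta_mulmx !col_mxEd !col_mxEu !mxE eqxx /=.
rewrite -mulrN -mulrDr; case: (enum_val j) => f /=.
- by rewrite mul0r add0r gate_natr ?ler01 ?lexx // eq_sym code_eqE.
- by rewrite mul1r addr0 gate_natr ?ler0n ?ler_nat ?(ltnW (ltn_ord s0)) // eq_sym code_eqE.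
Qed.

Lemma table_logit v e :
  (table_unembedding (inl v) *m col_mx e (col_mx subject_and_code lookup_features)) 0 0 =
  score (preimage v [ffun i => rs i]) (val s0)%:R.
Proof.
rewrite /= !mul_row_col !mul0mx !add0r mxE /lookup_features.
under eq_bigr do rewrite !mxE.
rewrite (sum_enum_val (fun u => table_weight v u *
  (if unit_seq u == [ffun i => rs i] then unit_signal u else 0))).
by rewrite big_sumType /= !sum_mul_ifeq /score mulr1 addrC.
Qed.

Lemma table_readout e (a := khop_answer g s0 rs) :
  let x := col_mx e (col_mx subject_and_code lookup_features) in
  forall w, w != inl a ->
  (table_unembedding w *m x) 0 0 < (table_unembedding (inl a) *m x) 0 0.
Proof.
move=> x w neq_w.
have hop_rs : hop_perm g [ffun i => rs i] = hop_perm g rs.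
  by apply: eq_bigr => i _; rewrite ffunE.
have -> : (table_unembedding (inl a) *m x) 0 0 = score (val s0)%:R (val s0)%:R.
  by rewrite table_logit /preimage hop_rs /a khop_answerE permK.
case: w neq_w => [v | r] neq_w; last by rewrite /= mul0mx mxE score_self_gt0.
rewrite table_logit score_lt // /preimage hop_rs.
apply: contra neq_w => /eqP/val_inj eq_s0.
by rewrite /a khop_answerE -eq_s0 permKV.
Qed.

End Run.

Lemma table_solves : solves_khop g table_transformer.
Proof.
move=> s0 rs; rewrite /outputs /hidden /= foldl_idle_layer col_apply_layer /=.
rewrite /copy_head (col_gather (E := fun j => input_pair (khop_input s0 rs j) j));
  last by move=> j; rewrite col_of_columns.
rewrite mul_col_mx mul1mx mul0mx sum_input_pairs /mlp_step mlp_lookup_layer.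
by rewrite !add_col_mx !addr0 add0r; apply: table_readout.
Qed.

End LookupTable.

Theorem theorem3 :
  (* (1) d = O~(k), MLP width O(N R) *)
  (exists C c : nat, forall N R k : nat, (0 < N)%N -> (0 < R)%N -> (0 < k)%N ->
     forall g : 'I_R -> {perm 'I_N},
     exists (d m : nat) (M : transformer (vocab N R) d m k.+1),
       [/\ depth M = k, solves_khop g M,
           (d <= C * k * polylog N R k c)%N & (m <= C * (N * R))%N])
  /\
  (* (2) d = O~(R^k), MLP width O~(R^k) *)
  (exists C c : nat, forall N R k : nat, (0 < N)%N -> (0 < R)%N -> (0 < k)%N ->
     forall g : 'I_R -> {perm 'I_N},
     exists (d m : nat) (M : transformer (vocab N R) d m k.+1),
       [/\ depth M = k, solves_khop g M,
           (d <= C * R ^ k * polylog N R k c)%N &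
           (m <= C * R ^ k * polylog N R k c)%N]).
Proof.
split.
- exists 5%N, 0%N => N R [|k] // _ _ _ g.
  exists _, _, (chain_transformer k g); split.
  + by rewrite /depth /= size_map size_behead size_enum_ord.
  + exact: chain_solves.
  + rewrite /polylog expn0 muln1; lia.
  + rewrite card_prod !card_ord; lia.
- exists 10%N, 0%N => N R [|k] // _ R_gt0 _ g.
  exists _, _, (table_transformer k g); split.
  + by rewrite /depth /= size_nseq.
  + exact: table_solves.
  + have := expn_gt0 R k.+1; rewrite R_gt0 card_sum card_ffun !card_ord /polylog expn0 muln1.
    lia.
  + rewrite card_sum card_ffun !card_ord /polylog expn0 muln1; lia.
Qed.
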